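(* Let $W$ be an sc-Banach space, $E=\mathbb R^n\oplus W$, $C=[0,\infty)^n\oplus W$, and let $N\subset E_\infty$ be a finite-dimensional linear subspace such that $C\cap N$ is a closed convex cone. If $a\in C\cap N$ is nonzero and generates an extreme ray of $C\cap N$, then $\dim(N)-1\le\sharp\sigma_a$. If, in addition, $N$ is in good position to $C$, then $\dim(N)-1=\sharp\sigma_a$.
   Context: An sc-Banach space is a Banach space $W$ with nested Banach spaces $W=W_0\supset W_1\supset\cdots$, compact inclusions $W_n\to W_m$ ($m<n$), $W_\infty=\bigcap W_m$ dense in each $W_m$; $E$ has levels $E_m=\mathbb R^n\oplus W_m$, $E_\infty=\mathbb R^n\oplus W_\infty$, and $\|\cdot\|$ is the level-$0$ norm. For $a=(a_1,\dots,a_n,a_\infty)\in C$, $\sigma_a=\{i\in\{1,\dots,n\}: a_i=0\}$. A closed convex cone is a closed convex set $P$ with $P\cap(-P)=\{0\}$ and $\mathbb R^+P=P$; an extreme ray is $\mathbb R^+x$, $x\in P\setminus\{0\}$, such that $y\in P$, $x-y\in P$ imply $y\in\mathbb R^+x$. An sc-complement of $N$ is a closed subspace $N^\perp$ with $E_m=(N\cap E_m)\oplus(N^\perp\cap E_m)$ topologically for all $m$, both pieces sc-subspaces. $N$ is in good position to $C$ if $N\cap C$ has nonempty interior in $N$ and there are an sc-complement $N^\perp$ and $c>0$ such that for $(n,m)\in N\oplus N^\perp$ with $\|m\|\le c\|n\|$: $n+m\in C$ iff $n\in C$. *)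

From mathcomp Require Import all_boot all_algebra all_classical all_reals all_analysis.
Import GRing.Theory Num.Theory numFieldNormedType.Exports.
Set Implicit Arguments. Unset Strict Implicit. Unset Printing Implicit Defensive.
Local Open Scope ring_scope.
Local Open Scope classical_set_scope.

Record sc_structure (R : realType) (W : normedModType R) : Type := SC {
  sc_lvl : nat -> set W;
  sc_nrm : nat -> W -> R;
  sc_lvl0 : sc_lvl 0 = setT;
  sc_nrm0 : forall w, sc_nrm 0 w = `|w|;
  sc_nested : forall m, sc_lvl m.+1 `<=` sc_lvl m;
  sc_lvl_sub0 : forall m, sc_lvl m 0;
  sc_lvl_subD : forall m (a : R) x y,
      sc_lvl m x -> sc_lvl m y -> sc_lvl m (a *: x + y);
  sc_nrm_ge0 : forall m x, sc_lvl m x -> 0 <= sc_nrm m x;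
  sc_nrm_eq0 : forall m x, sc_lvl m x -> sc_nrm m x = 0 -> x = 0;
  sc_nrmZ : forall m (a : R) x, sc_lvl m x -> sc_nrm m (a *: x) = `|a| * sc_nrm m x;
  sc_nrm_triangle : forall m x y, sc_lvl m x -> sc_lvl m y ->
      sc_nrm m (x + y) <= sc_nrm m x + sc_nrm m y;
  sc_complete : forall m (u : nat -> W), (forall k, sc_lvl m (u k)) ->
      (forall eps, 0 < eps -> exists K, forall i j, (K <= i)%N -> (K <= j)%N ->
          sc_nrm m (u i - u j) < eps) ->
      exists l, sc_lvl m l /\
        (forall eps, 0 < eps -> exists K, forall i, (K <= i)%N -> sc_nrm m (u i - l) < eps);
  (* compactness of the inclusion W_k -> W_m for m < k: bounded sequences in
     W_k have subsequences converging in W_m *)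
  sc_compact : forall m k, (m < k)%N -> forall u : nat -> W,
      (forall j, sc_lvl k (u j)) -> (exists M, forall j, sc_nrm k (u j) <= M) ->
      exists (phi : nat -> nat) (l : W),
        (forall j, (phi j < phi j.+1)%N) /\ sc_lvl m l /\
        (forall eps, 0 < eps -> exists K, forall j, (K <= j)%N ->
            sc_nrm m (u (phi j) - l) < eps);
  sc_dense : forall m x eps, sc_lvl m x -> 0 < eps ->
      exists y, (forall k, sc_lvl k y) /\ sc_nrm m (x - y) < eps
}.

Section EDefs.
Context (R : realType) (W : completeNormedModType R) (n : nat).

(* E = R^n ⊕ W, modeled as 'rV[R]_n * W; its (level-0) norm is the
   product (max) norm, equivalent to any norm on R^n ⊕ W. *)
Definition Etype := ('rV[R]_n * W)%type.

Definition Elvl (sc : sc_structure W) (m : nat) : set Etype :=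
  [set e | sc_lvl sc m e.2].
Definition Enrm (sc : sc_structure W) (m : nat) (e : Etype) : R :=
  Num.max `|e.1| (sc_nrm sc m e.2).
Definition Einf (sc : sc_structure W) : set Etype :=
  [set e | forall m, Elvl sc m e].

Definition Cquad : set Etype := [set e : Etype | forall i : 'I_n, 0 <= e.1 ord0 i].

Definition sigma_set (a : Etype) : {set 'I_n} := [set i : 'I_n | a.1 ord0 i == 0].

End EDefs.
Arguments Etype {R} W n.
Arguments Cquad {R} W n.

Definition is_subspace (R : realType) (V : lmodType R) (S : set V) : Prop :=
  S 0 /\ forall (a : R) x y, S x -> S y -> S (a *: x + y).

Definition is_dim (R : realType) (V : lmodType R) (S : set V) (d : nat) : Prop :=
  exists s : seq V, size s = d /\
    (forall c : nat -> R, \sum_(i < size s) c i *: s`_i = 0 ->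
        forall i, (i < size s)%N -> c i = 0) /\
    (forall x, S x <-> exists c : nat -> R, x = \sum_(i < size s) c i *: s`_i).

Definition closed_convex_cone (R : realType) (V : normedModType R) (P : set V) : Prop :=
  closed P /\
  (forall x y (t : R), P x -> P y -> 0 <= t <= 1 -> P (t *: x + (1 - t) *: y)) /\
  P 0 /\ (forall x, P x -> P (- x) -> x = 0) /\
  (forall (t : R) x, 0 <= t -> P x -> P (t *: x)).

Definition extreme_ray (R : realType) (V : normedModType R) (P : set V) (a : V) : Prop :=
  P a /\ a <> 0 /\
  forall y, P y -> P (a - y) -> exists t : R, 0 <= t /\ y = t *: a.

Section Position.
Context (R : realType) (W : completeNormedModType R) (n : nat) (sc : sc_structure W).

Definition sc_subspace (F : set (Etype W n)) : Prop :=
  is_subspace F /\ closed F /\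
  forall m x eps, F x -> Elvl sc m x -> 0 < eps ->
    exists y, F y /\ Einf sc y /\ Enrm sc m (x - y) < eps.

(* Np is an sc-complement of N: closed subspace with
   E_m = (N ∩ E_m) ⊕ (Np ∩ E_m) topologically for all m (direct sum with
   bounded projections), both pieces sc-subspaces. *)
Definition sc_complement (N Np : set (Etype W n)) : Prop :=
  is_subspace Np /\ closed Np /\
  (forall e, N e -> Np e -> e = 0) /\
  (forall m, exists K : R, 0 <= K /\
     forall e, Elvl sc m e -> exists u v, N u /\ Np v /\ Elvl sc m u /\ Elvl sc m v /\
        e = u + v /\ Enrm sc m u <= K * Enrm sc m e) /\
  sc_subspace N /\ sc_subspace Np.

Definition good_position (N : set (Etype W n)) : Prop :=
  (exists x (r : R), N x /\ 0 < r /\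
     forall y, N y -> `|y - x| < r -> (N `&` Cquad W n) y) /\
  (exists Np (c : R), sc_complement N Np /\ 0 < c /\
     forall u v, N u -> Np v -> `|v| <= c * `|u| ->
        (Cquad W n (u + v) <-> Cquad W n u)).

End Position.

(* Coordinates identify N with R^d; let K send coordinates to the components
   indexed by sigma_a.  A vector x of N vanishing on sigma_a can be added to
   and subtracted from a, suitably scaled, without leaving C (the other
   components of a are positive), so extremality of a forces x onto the ray
   of a: the kernel of K is the line through the coordinates of a, whence
   d - 1 = rank K <= #sigma_a.  In good position the complement directions
   vanish on sigma_a, since a can be perturbed along them inside C; hence every
   vector of E agrees on sigma_a with a vector of N, K is onto and equality
   holds. *)

From HB Require Import structures.
From mathcomp Require Import all_boot all_algebra all_classical all_reals all_analysis.
From mathcomp Require Import zify.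
Import order.Order.TTheory GRing.Theory Num.Theory numFieldNormedType.Exports.
Local Open Scope ring_scope.
Local Open Scope classical_set_scope.

Set Implicit Arguments. Unset Strict Implicit.

Section KernelLine.
Variables (F : fieldType) (m k : nat) (K : 'M[F]_(m, k)) (c : 'rV[F]_m).
Hypothesis ker_line : forall r, r *m K = 0 -> exists t, r = t *: c.

Lemma kermx_sub_line : (kermx K <= c)%MS.
Proof.
apply/row_subP => i; have /ker_line[t ->] : row i (kermx K) *m K = 0.
  by apply/eqP; rewrite -sub_kermx row_sub.
exact: scalemx_sub.
Qed.

Lemma ker_line_dim_le : (m.-1 <= k)%N.
Proof.
have := mxrankS kermx_sub_line; rewrite mxrank_ker.
by have := rank_leq_row c; have := rank_leq_col K; lia.
Qed.

Lemma ker_line_dim_eq : c != 0 -> c *m K = 0 -> row_full K -> m.-1 = k.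
Proof.
move=> c0 cK /eqP fullK.
have := mxrankS kermx_sub_line.
have /mxrankS : (c <= kermx K)%MS by rewrite sub_kermx cK.
rewrite mxrank_ker rank_rV c0.
by have := rank_leq_row c; have := rank_leq_row K; lia.
Qed.

End KernelLine.

Lemma row_full_delta (F : fieldType) (m k : nat) (K : 'M[F]_(m, k)) :
  (forall j, exists r, (delta_mx 0 j : 'rV_k) = r *m K) -> row_full K.
Proof.
move=> onto; rewrite -sub1mx; apply/row_subP => j.
by rewrite row1; have [r ->] := onto j; exact: submxMl.
Qed.

Section Subspace.
Variables (R : realType) (V : lmodType R).

Lemma subspaceZ (S : set V) : is_subspace S -> forall t x, S x -> S (t *: x).
Proof. by move=> [S0 SD] t x Sx; rewrite -[_ *: x]addr0; apply: SD. Qed.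

Lemma subspaceD (S : set V) : is_subspace S -> forall x y, S x -> S y -> S (x + y).
Proof. by move=> [_ SD] x y Sx Sy; rewrite -[x]scale1r; apply: SD. Qed.

Definition lincomb (s : seq V) (r : 'rV[R]_(size s)) : V :=
  \sum_(i < size s) r 0 i *: s`_i.

Fact lincomb_is_linear (s : seq V) : linear (@lincomb s).
Proof.
move=> t r1 r2; rewrite /lincomb scaler_sumr -big_split.
by apply: eq_bigr => i _; rewrite !mxE scalerDl scalerA.
Qed.

End Subspace.
Arguments lincomb {R V} s r.

HB.instance Definition _ (R : realType) (V : lmodType R) (s : seq V) :=
  GRing.isLinear.Build R _ V _ (lincomb s) (@lincomb_is_linear R V s).

Lemma is_dim_coords (R : realType) (V : lmodType R) (S : set V) d :
  is_dim S d ->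
  exists f : {linear 'rV[R]_d -> V},
    injective f /\ forall x, S x <-> exists r, x = f r.
Proof.
move=> [s [<- [free span]]].
pose coef (r : 'rV[R]_(size s)) j := oapp (r 0) 0 (insub j).
have lincombE r : \sum_(i < size s) coef r i *: s`_i = lincomb s r.
  by apply: eq_bigr => i _; rewrite /coef valK.
exists (lincomb s : {linear _ -> _}); split.
  apply: raddf_inj => r r0; apply/rowP => i; rewrite mxE.
  by have := free (coef r); rewrite lincombE => /(_ r0 i (ltn_ord i)); rewrite /coef valK.
move=> x; rewrite span; split=> [[c ->]|[r ->]]; last by exists (coef r).
by exists (\row_i c i); apply: eq_bigr => i _; rewrite mxE.
Qed.

Lemma small_perturbation_ge0 (R : realType) (a x : R) : 0 <= a -> (a = 0 -> x = 0) ->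
  \forall e \near 0^'+, forall t, `|t| <= e -> 0 <= a + t * x.
Proof.
move=> a_ge0 ax; have [a0|a_neq0] := eqVneq a 0.
  by apply: nearW => e t _; rewrite a0 ax // mulr0 addr0.
have x1_gt0 : 0 < `|x| + 1 by rewrite ltr_wpDl.
have bound_gt0 : 0 < a / (`|x| + 1) by rewrite divr_gt0 // lt_def a_neq0.
near=> e => t te.
have e_le : e <= a / (`|x| + 1) by near: e; exact: nbhs_right_le.
have tx_le : `|t * x| <= a.
  rewrite normrM; apply: le_trans (ler_wpM2r (normr_ge0 x) (le_trans te e_le)) _.
  by rewrite mulrAC ler_pdivrMr // ler_pM2l ?lt_def ?a_neq0 // lerDl.
by rewrite -[t * x]opprK subr_ge0 (le_trans _ tx_le) // -normrN ler_norm.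
Unshelve. all: by end_near.
Qed.

Lemma small_perturbation_row_ge0 (R : realType) k (a x : 'rV[R]_k) :
  (forall j, 0 <= a 0 j) -> (forall j, a 0 j = 0 -> x 0 j = 0) ->
  exists2 e : R, 0 < e & forall t, `|t| <= e -> forall j, 0 <= a 0 j + t * x 0 j.
Proof.
move=> a_ge0 ax.
have /filter_ex[e [e_gt0 He]] :
    \forall e \near (0 : R)^'+, 0 < e /\ forall j t, `|t| <= e -> 0 <= a 0 j + t * x 0 j.
  apply: filterS2 (nbhs_right_gt 0) (filter_forall _ (fun j => small_perturbation_ge0 (a_ge0 j) (ax j))).
  by move=> e e0 He; split=> // j t; apply: He.
by exists e => // t te j; apply: He.
Qed.

Section Quadrant.
Variables (R : realType) (W : completeNormedModType R) (n : nat).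
Local Notation E := (Etype W n).
Local Notation C := (Cquad W n).

Lemma CquadZ (t : R) (x : E) : 0 <= t -> C x -> C (t *: x).
Proof. by move=> t_ge0 Cx i; rewrite mxE mulr_ge0. Qed.

Lemma Cquad_small_perturbation (a x : E) : C a ->
    (forall j, j \in sigma_set a -> x.1 0 j = 0) ->
  exists2 e : R, 0 < e & forall t, `|t| <= e -> C (a + t *: x).
Proof.
move=> Ca x_sigma; have [|e e_gt0 He] := @small_perturbation_row_ge0 R n a.1 x.1 Ca.
  by move=> j aj; apply: x_sigma; rewrite inE aj.
by exists e => // t te j; rewrite !mxE He.
Qed.

Lemma extreme_ray_sigma_proportional (N : set E) (a x : E) :
    is_subspace N -> extreme_ray (C `&` N) a -> N x ->
    (forall j, j \in sigma_set a -> x.1 0 j = 0) ->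
  exists t : R, x = t *: a.
Proof.
move=> subN [[Ca Na] [_ extr]] Nx x_sigma.
have [e e_gt0 Ce] := Cquad_small_perturbation Ca x_sigma.
pose y t := 2^-1 *: (a + t *: x).
have CNy t : `|t| <= e -> (C `&` N) (y t).
  move=> te; split; first by apply: CquadZ; [rewrite invr_ge0|apply: Ce].
  exact/(subspaceZ subN)/(subspaceD subN Na)/(subspaceZ subN).
have a_ye : a - y e = y (- e).
  rewrite /y scaleNr !scalerDr scalerN opprD addrA; congr (_ - _).
  by rewrite -{1}[a]scale1r -scalerBl {1}(splitr 1) mul1r addrK.
have e_le : `|e| <= e by rewrite ger0_norm // ltW.
have [t [_ ye]] : exists t, 0 <= t /\ y e = t *: a.
  by apply: extr; [exact: CNy | rewrite a_ye; apply: CNy; rewrite normrN].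
exists (e^-1 * (2 * t - 1)); rewrite -scalerA scalerBl scale1r.
have -> : (2 * t) *: a = a + e *: x.
  by rewrite -scalerA -ye scalerA divff ?pnatr_eq0 // scale1r.
by rewrite [a + _]addrC addrK scalerA mulVf ?gt_eqF // scale1r.
Qed.

Lemma complement_sigma_eq0 (N Np : set E) (c : R) (a v : E) :
    is_subspace Np -> 0 < c ->
    (forall u w, N u -> Np w -> `|w| <= c * `|u| -> (C (u + w) <-> C u)) ->
    N a -> C a -> a <> 0 -> Np v ->
  forall j, j \in sigma_set a -> v.1 0 j = 0.
Proof.
move=> subNp c_gt0 gp Na Ca a0 Npv j; rewrite inE => /eqP aj.
have v1_gt0 : 0 < `|v| + 1 by rewrite ltr_wpDl.
have ca_gt0 : 0 < c * `|a| by rewrite mulr_gt0 // normr_gt0; apply/eqP.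
pose t := c * `|a| / (`|v| + 1).
have t_gt0 : 0 < t by rewrite divr_gt0.
have tv_ge0 s : `|s| = t -> 0 <= s * v.1 0 j.
  move=> st; have Npsv := subspaceZ subNp s Npv.
  have sv_le : `|s *: v| <= c * `|a|.
    by rewrite normrZ st /t mulrAC ler_pdivrMr // ler_pM2l // lerDl.
  by have := (gp _ _ Na Npsv sv_le).2 Ca j; rewrite !mxE aj add0r.
have := tv_ge0 (- t); rewrite normrN gtr0_norm // mulNr oppr_ge0 => /(_ erefl).
have := tv_ge0 t; rewrite gtr0_norm // => /(_ erefl) tv_ge tv_le.
have /eqP : t * v.1 0 j = 0 by apply/eqP; rewrite eq_le tv_le tv_ge.
by rewrite mulf_eq0 gt_eqF //= => /eqP.
Qed.

Lemma good_position_sigma_onto (sc : sc_structure W) (N : set E) (a : E) :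
    good_position sc N -> N a -> C a -> a <> 0 ->
  forall z : E, exists2 u, N u & forall j, j \in sigma_set a -> u.1 0 j = z.1 0 j.
Proof.
move=> [_ [Np [c [[subNp [_ [_ [decomp _]]]] [c_gt0 gp]]]]] Na Ca a0 z.
have [? [_ /(_ z)]] := decomp 0%N; rewrite /Elvl /= sc_lvl0.
move=> /(_ I) [u [v [Nu [Npv [_ [_ [-> _]]]]]]].
exists u => // j j_sigma.
by rewrite mxE (complement_sigma_eq0 subNp c_gt0 gp Na Ca a0 Npv j_sigma) addr0.
Qed.

Lemma mul_coord_mx d k (f : {linear 'rV[R]_d -> E}) (g : 'I_k -> 'I_n) r :
  r *m \matrix_(i, j) (f (delta_mx 0 i)).1 0 (g j) = \row_j (f r).1 0 (g j).
Proof.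
apply/rowP => j; rewrite !mxE {2}(row_sum_delta r) linear_sum.
rewrite (big_morph fst (id1 := 0) (op1 := +%R)) // summxE.
by apply: eq_bigr => i _; rewrite linearZ !mxE.
Qed.

End Quadrant.

Theorem lemma6p5 (R : realType) (W : completeNormedModType R)
    (sc : sc_structure W) (n : nat) (N : set (Etype W n)) (d : nat) :
  is_subspace N -> N `<=` Einf sc -> is_dim N d ->
  closed_convex_cone (Cquad W n `&` N) ->
  forall a : Etype W n, extreme_ray (Cquad W n `&` N) a ->
    (d.-1 <= #|sigma_set a|)%N /\
    (good_position sc N -> d.-1 = #|sigma_set a|).
Proof.
move=> subN _ dimN _ a extr; have [[Ca Na] [a0 _]] := extr.
have [f [f_inj Nf]] := is_dim_coords dimN.
have [ca a_eq] := (Nf a).1 Na.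
pose K : 'M[R]_(d, #|sigma_set a|) := \matrix_(i, j) (f (delta_mx 0 i)).1 0 (enum_val j).
have K_sigma (r : 'rV_d) j : (r *m K) 0 j = (f r).1 0 (enum_val j).
  by rewrite mul_coord_mx mxE.
have ker_line (r : 'rV_d) : r *m K = 0 -> exists t, r = t *: ca.
  move=> rK; have [|t fr] := extreme_ray_sigma_proportional subN extr ((Nf _).2 (ex_intro _ r erefl)).
    by move=> j j_sigma; rewrite -(enum_rankK_in j_sigma j_sigma) -K_sigma rK mxE.
  by exists t; apply: f_inj; rewrite linearZ -a_eq.
split; first exact: ker_line_dim_le ker_line.
move=> gp; apply: ker_line_dim_eq ker_line _ _ _.
- by apply: contra_notN a0 => /eqP ca0; rewrite a_eq ca0 linear0.
- by apply/rowP => j; rewrite K_sigma -a_eq mxE; have := enum_valP j; rewrite inE => /eqP.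
- apply: row_full_delta => j.
  have [u Nu u_sigma] := good_position_sigma_onto gp Na Ca a0 (delta_mx 0 (enum_val j), 0).
  have [r u_eq] := (Nf u).1 Nu; exists r; apply/rowP => j'.
  by rewrite K_sigma -u_eq u_sigma ?enum_valP // !mxE (inj_eq enum_val_inj).
Qed.
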